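(* Let $G$ be a graph, $k,d$ integers, $X$ a minimum vertex cover of $G$ that is also an independent set of $G$, $Y=V(G)\setminus X$, and $X_L,X_R$ disjoint subsets of $X$. Then $((G,k,d),X,\langle X_L,X_R\rangle)$ is a Yes-instance of \textsc{Annotated Contraction(vc)} if and only if it is a Yes-instance of \textsc{Constrained MaxCut}.
   Context: All graphs are finite, simple and undirected. $\mathrm{rank}(H)$ is $|V(H)|$ minus the number of connected components of $H$; for $S\subseteq V(G)$, $\mathrm{rank}(S):=\mathrm{rank}(G[S])$; for an edge set $F$, $\mathrm{rank}(F):=\mathrm{rank}(G[V(F)])$ where $V(F)$ is the set of endpoints of $F$. For $S_1,S_2\subseteq V(G)$, $E(S_1,S_2)$ is the set of edges with one endpoint in $S_1$ and the other in $S_2$. The instance is a Yes-instance of \textsc{Annotated Contraction(vc)} iff there exist $X_s\subseteq X$ and $Y_s\subseteq Y$ with (i) $(X\setminus X_s)\cup Y_s$ is a vertex cover of $G$, (ii) $\mathrm{rank}((X\setminus X_s)\cup Y_s)\ge k$, (iii) $|Y_s|-|X_s|\le k-d$, (iv) $X_L\cap X_s=\emptyset$ and $X_R\subseteq X_s$. It is a Yes-instance of \textsc{Constrained MaxCut} iff there exists a partition $\langle V_L,V_R\rangle$ of $V(G)$ with (i) $E(V_L\cap Y,V_R\cap X)=\emptyset$, (ii) $\mathrm{rank}(E(V_L\cap X,V_R\cap Y))\ge k$, (iii) $|V_R\cap Y|-|V_R\cap X|\le k-d$, (iv) $X_L\subseteq V_L$ and $X_R\subseteq V_R$. *)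

(* A simple graph G is a finite type T of vertices with an
   irreflexive symmetric adjacency relation e. *)
From mathcomp Require Import all_boot all_order all_algebra.
Set Implicit Arguments. Unset Strict Implicit. Unset Printing Implicit Defensive.

Section Graphs.
Variables (T : finType) (e : rel T).

Definition induced_rel (S : {set T}) : rel T :=
  fun x y => [&& e x y, x \in S & y \in S].

Definition comp_of (S : {set T}) (x : T) : {set T} :=
  [set y in S | connect (induced_rel S) x y].

Definition ncomp (S : {set T}) : nat := #|[set comp_of S x | x in S]|.

Definition rank_set (S : {set T}) : nat := #|S| - ncomp S.

Definition endpoints_between (A B : {set T}) : {set T} :=
  [set v | [exists u, e u v && (((u \in A) && (v \in B)) || ((u \in B) && (v \in A)))]].

(* rank(E(A,B)) = rank(G[V(E(A,B))]) *)
Definition rank_edges (A B : {set T}) : nat := rank_set (endpoints_between A B).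

Definition no_edges_between (A B : {set T}) : Prop :=
  forall u v, u \in A -> v \in B -> ~~ e u v.

Definition vertex_cover (C : {set T}) : Prop :=
  forall x y, e x y -> (x \in C) || (y \in C).

Definition min_vertex_cover (C : {set T}) : Prop :=
  vertex_cover C /\ forall C' : {set T}, vertex_cover C' -> #|C| <= #|C'|.

Definition independent (S : {set T}) : Prop :=
  forall x y, x \in S -> y \in S -> ~~ e x y.

Definition annotated_contraction_vc (k d : int) (X XL XR : {set T}) : Prop :=
  let Y := ~: X in
  exists Xs Ys : {set T},
    [/\ Xs \subset X /\ Ys \subset Y,
        vertex_cover ((X :\: Xs) :|: Ys),
        (k <= (rank_set ((X :\: Xs) :|: Ys))%:Z)%R,
        ((#|Ys|%:Z - #|Xs|%:Z) <= k - d)%R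
      & [disjoint XL & Xs] /\ XR \subset Xs].

Definition constrained_maxcut (k d : int) (X XL XR : {set T}) : Prop :=
  let Y := ~: X in
  exists VL : {set T},
    let VR := ~: VL in
    [/\ no_edges_between (VL :&: Y) (VR :&: X),
        (k <= (rank_edges (VL :&: X) (VR :&: Y))%:Z)%R,
        ((#|VR :&: Y|%:Z - #|VR :&: X|%:Z) <= k - d)%R
      & XL \subset VL /\ XR \subset VR].

End Graphs.

From mathcomp Require Import all_boot all_order all_algebra.

Set Implicit Arguments.
Unset Strict Implicit.
Unset Printing Implicit Defensive.

(* Since X is an independent vertex cover, every edge joins X to Y = V \ X.
   The two problems correspond through V_R = X_s ∪ Y_s: the cover condition
   becomes the absence of edges from V_L ∩ Y to V_R ∩ X, and the vertex set
   (X \ X_s) ∪ Y_s becomes (V_L ∩ X) ∪ (V_R ∩ Y).  Deleting isolated vertices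
   does not change the rank of an induced subgraph, and the non-isolated
   vertices of G[(V_L ∩ X) ∪ (V_R ∩ Y)] are, by bipartiteness, exactly the
   endpoints of E(V_L ∩ X, V_R ∩ Y); so the two rank conditions agree. *)

Section Nonisolated.
Variables (T : finType) (e : rel T).
Hypothesis e_sym : symmetric e.

Definition nonisolated (S : {set T}) : {set T} :=
  [set v in S | [exists u, (u \in S) && e v u]].

Lemma nonisolated_sub (S : {set T}) : nonisolated S \subset S.
Proof. by apply/subsetP => v; rewrite inE => /andP[]. Qed.

Lemma induced_rel_nonisolated (S : {set T}) :
  induced_rel e S =2 induced_rel e (nonisolated S).
Proof.
move=> a b; rewrite /induced_rel !inE.
case eab: (e a b); case aS: (a \in S); case bS: (b \in S); rewrite //= ?andbF //.
by symmetry; apply/andP; split; apply/existsP; [exists b | exists a];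
  rewrite ?aS ?bS // e_sym.
Qed.

Lemma comp_of_nonisolated (S : {set T}) (x : T) :
  x \in nonisolated S -> comp_of e S x = comp_of e (nonisolated S) x.
Proof.
move=> xN; apply/setP => y; rewrite !inE (eq_connect (induced_rel_nonisolated S)).
case cxy: (connect _ x y); rewrite ?andbF ?andbT //.
have closedN : closed (induced_rel e (nonisolated S)) (mem (nonisolated S)).
  by move=> a b /and3P[_ -> ->].
by have := closed_connect closedN cxy; rewrite xN inE => /esym/andP[-> ->].
Qed.

Lemma comp_of_isolated (S : {set T}) (x : T) :
  x \in S :\: nonisolated S -> comp_of e S x = [set x].
Proof.
rewrite !inE => /andP[xN xS]; apply/setP => y; rewrite !inE.
have [->|nyx] := eqVneq y x; first by rewrite xS connect0.
suff -> : connect (induced_rel e S) x y = false by rewrite andbF.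
apply/negbTE/negP => /connectP [[|z p]] /=; first by move=> _ yx; rewrite yx eqxx in nyx.
move=> /andP[/and3P[exz _ zS] _] _; move: xN; rewrite xS /=.
by move/existsPn/(_ z); rewrite zS exz.
Qed.

Lemma ncomp_nonisolated (S : {set T}) :
  ncomp e S = ncomp e (nonisolated S) + #|S :\: nonisolated S|.
Proof.
set N := nonisolated S.
have compsE : [set comp_of e S x | x in S] =
    [set comp_of e N x | x in N] :|: [set [set x] | x in S :\: N].
  apply/setP => C; apply/imsetP/setUP.
    move=> [x xS ->]; case xN: (x \in N).
      by left; apply/imsetP; exists x => //; rewrite (comp_of_nonisolated xN).
    have xSN : x \in S :\: N by rewrite inE xN.
    by right; apply/imsetP; exists x => //; rewrite (comp_of_isolated xSN).
  move=> [/imsetP [x xN ->]|/imsetP [x xSN ->]].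
    exists x; first exact: (subsetP (nonisolated_sub S)).
    by rewrite (comp_of_nonisolated xN).
  exists x; last by rewrite (comp_of_isolated xSN).
  by move: xSN; rewrite inE => /andP[].
have compsI : [set comp_of e N x | x in N] :&: [set [set x] | x in S :\: N] = set0.
  apply/setP => C; rewrite !inE; apply/negbTE/negP.
  move=> /andP[/imsetP [x xN ->] /imsetP [z zSN compx]].
  have : x \in comp_of e N x by rewrite inE xN connect0.
  by rewrite compx inE => /eqP xz; move: zSN; rewrite -xz inE xN.
rewrite /ncomp compsE cardsU compsI cards0 subn0.
by rewrite (card_imset _ (@set1_inj T)).
Qed.

Lemma rank_set_nonisolated (S : {set T}) :
  rank_set e S = rank_set e (nonisolated S).
Proof.
rewrite /rank_set ncomp_nonisolated -(cardsID (nonisolated S) S).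
by rewrite (setIidPr (nonisolated_sub S)) subnDr.
Qed.

End Nonisolated.

Section Bipartite.
Variables (T : finType) (e : rel T) (X : {set T}).
Hypotheses (e_sym : symmetric e) (coverX : vertex_cover e X) (indepX : independent e X).

Lemma bipartite_edge (u v : T) : e u v -> (u \in X) != (v \in X).
Proof.
move=> euv; have := coverX euv; have := @indepX u v.
by case: (u \in X); case: (v \in X); rewrite //= euv => /(_ isT isT).
Qed.

Lemma endpoints_between_bipartite (A B : {set T}) :
  A \subset X -> B \subset ~: X ->
  endpoints_between e A B = nonisolated e (A :|: B).
Proof.
move=> /subsetP sA /subsetP sB; apply/setP => v; rewrite !inE.
apply/existsP/andP => [[u /andP[euv uv]] | [vAB /existsP [u /andP[uAB evu]]]].
  split; first by case/orP: uv => /andP[_ ->]; rewrite ?orbT.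
  by apply/existsP; exists u; rewrite inE e_sym euv andbT;
    case/orP: uv => /andP[-> _]; rewrite ?orbT.
exists u; rewrite e_sym evu /=; have := bipartite_edge evu.
case/orP: vAB => vI; rewrite inE in uAB; case/orP: uAB => uI; rewrite ?vI ?uI ?orbT //.
- by rewrite (sA _ vI) (sA _ uI).
- by have := sB _ vI; have := sB _ uI; rewrite !inE => /negbTE -> /negbTE ->.
Qed.

Lemma rank_edges_bipartite (A B : {set T}) :
  A \subset X -> B \subset ~: X -> rank_edges e A B = rank_set e (A :|: B).
Proof.
by move=> sA sB; rewrite /rank_edges endpoints_between_bipartite //
  -rank_set_nonisolated.
Qed.

Lemma vertex_cover_cut (VL : {set T}) :
  vertex_cover e ((VL :&: X) :|: (~: VL :&: ~: X)) <->
  no_edges_between e (VL :&: ~: X) (~: VL :&: X).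
Proof.
split=> [cover u v | noedge x y exy].
  rewrite !inE => /andP[uL uY] /andP[vR vX]; apply/negP => /cover.
  by rewrite !inE (negbTE uY) (negbTE vR) vX uL.
wlog xX : x y exy / x \in X.
  move=> side; case: (boolP (x \in X)) => [xX | xY]; first exact: side.
  rewrite orbC; apply: side; first by rewrite e_sym.
  by have := bipartite_edge exy; rewrite (negbTE xY); case: (y \in X).
have yY : y \notin X by have := bipartite_edge exy; rewrite xX; case: (y \in X).
rewrite !inE xX (negbTE yY) /= !andbT !andbF orbF.
case xL: (x \in VL) => //=; apply/negP => yL.
by have := noedge y x; rewrite !inE yL yY xL xX e_sym exy => /(_ isT isT).
Qed.

End Bipartite.

Section Cuts.
Variables (T : finType) (X : {set T}).

Lemma split_by_cut (Xs Ys : {set T}) :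
  Xs \subset X -> Ys \subset ~: X ->
  exists VL : {set T}, Xs = ~: VL :&: X /\ Ys = ~: VL :&: ~: X.
Proof.
move=> /subsetP sXs /subsetP sYs; exists (~: (Xs :|: Ys)); rewrite setCK.
split; apply/setP => v; move/implyP: (sXs v); move/implyP: (sYs v); rewrite !inE;
  by case: (v \in X); case: (v \in Xs); case: (v \in Ys).
Qed.

Lemma setD_cut (VL : {set T}) : X :\: (~: VL :&: X) = VL :&: X.
Proof. by apply/setP => v; rewrite !inE; case: (v \in X); case: (v \in VL). Qed.

Lemma annotation_cut (XL XR VL : {set T}) :
  XL \subset X -> XR \subset X ->
  [disjoint XL & ~: VL :&: X] /\ XR \subset ~: VL :&: X <->
  XL \subset VL /\ XR \subset ~: VL.
Proof.
move=> /subsetP sXL /subsetP sXR.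
have -> : XR \subset ~: VL :&: X = (XR \subset ~: VL).
  by apply/subsetP/subsetP => sR x xR; have := sR x xR; rewrite !inE ?sXR ?andbT.
suff -> : [disjoint XL & ~: VL :&: X] = (XL \subset VL) by [].
rewrite disjoint_subset; apply/subsetP/subsetP => sL x xL; have := sL x xL;
  by rewrite !inE ?sXL ?andbT ?negbK.
Qed.

End Cuts.

Theorem lemma15 (T : finType) (e : rel T) (e_sym : symmetric e) (e_irr : irreflexive e)
  (k d : int) (X XL XR : {set T}) :
  min_vertex_cover e X -> independent e X ->
  XL \subset X -> XR \subset X -> [disjoint XL & XR] ->
  annotated_contraction_vc e k d X XL XR <-> constrained_maxcut e k d X XL XR.
Proof.
move=> [coverX _] indepX sXL sXR _.
have rankE VL : rank_edges e (VL :&: X) (~: VL :&: ~: X) =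
                rank_set e ((VL :&: X) :|: (~: VL :&: ~: X)).
  by rewrite (rank_edges_bipartite e_sym coverX indepX) ?subsetIr.
split.
- move=> [Xs [Ys [[sXs sYs] cover rk card annot]]].
  have [VL [dXs dYs]] := split_by_cut sXs sYs; subst Xs Ys.
  move: cover rk card annot; rewrite setD_cut => cover rk card annot.
  exists VL; split.
  + exact/(vertex_cover_cut e_sym coverX indepX).
  + by rewrite rankE.
  + exact: card.
  + exact/(annotation_cut VL sXL sXR).
- move=> [VL [noedge rk card annot]].
  exists (~: VL :&: X), (~: VL :&: ~: X); rewrite setD_cut; split.
  + by split; apply: subsetIr.
  + exact/(vertex_cover_cut e_sym coverX indepX).
  + by rewrite -rankE.
  + exact: card.
  + exact/(annotation_cut VL sXL sXR).
Qed.
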